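(* Let $\mathcal S$ be a system of pairwise compatible splits of a finite set $X$, and consider the arrangement $\mathcal A(\mathcal S)=\{H_\sigma\mid\sigma\in\mathcal S\}$ in $V_0(X)$. For each $\mathcal S'\subseteq\mathcal S$ one has $\bigcap_{\sigma\in\mathcal S'}H_\sigma=\langle\mathbbm 1_i-\mathbbm 1_j: i\sim_{\pi(\mathcal S')}j\rangle$, and the assignment $\pi(\mathcal S')\mapsto\bigcap_{\sigma\in\mathcal S'}H_\sigma$ is a well-defined poset isomorphism from $\operatorname{im}\pi=\{\pi(\mathcal S')\mid\mathcal S'\subseteq\mathcal S\}$ (ordered so that $\rho\le\rho'$ iff $\rho'$ refines $\rho$) onto the intersection poset $\mathscr L(\mathcal A(\mathcal S))$ (ordered by reverse inclusion). Consequently, identifying the ground set of the matroid of $\mathcal A(\mathcal S)$ with $\mathcal S$, its closure operator is $$\operatorname{cl}(\mathcal S')=\{\sigma\in\mathcal S\mid \pi(\mathcal S'\cup\{\sigma\})=\pi(\mathcal S')\}.$$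
   Context: $X$ finite, $n=|X|$, $\mathbbm 1_A:=\sum_{x\in A}\mathbbm 1_x$ in $\mathbb R^X$, $V_0(X)=\{x\in\mathbb R^X\mid\sum_ix_i=0\}$. A split $A|B$ is an unordered partition of $X$ into two nonempty blocks; $A|B$ and $C|D$ are compatible if one of $A\cap C,A\cap D,B\cap C,B\cap D$ is empty. For $\sigma=A|B$, $v_\sigma:=\tfrac{|B|}{n}\mathbbm 1_A-\tfrac{|A|}{n}\mathbbm 1_B$ and $H_\sigma:=\{x\in V_0(X)\mid\langle x,v_\sigma\rangle=0\}$. For $\mathcal S'\subseteq\mathcal S$, $\pi(\mathcal S')$ is the partition of $X$ into classes of the relation ''$i,j$ lie on the same side of every split in $\mathcal S'$'' (for $\mathcal S'=\emptyset$ this is the one-block partition). The intersection poset $\mathscr L(\mathcal A)$ is the set of all intersections of subsets of $\mathcal A$ (empty intersection $=V_0(X)$), ordered by reverse inclusion. The closure of $\mathcal S'$ in the matroid of the arrangement is the set of $\sigma\in\mathcal S$ with $\bigcap_{\tau\in\mathcal S'}H_\tau\subseteq H_\sigma$. *)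

(* X = 'I_n (a finite set with n = |X| elements).
   Vectors in R^X are row vectors 'rV[R]_n; subspaces are {vspace 'rV[R]_n}. *)
From HB Require Import structures.
From mathcomp Require Import all_boot all_order all_algebra.
Set Implicit Arguments. Unset Strict Implicit. Unset Printing Implicit Defensive.
Import Order.TTheory GRing.Theory Num.Theory.
Local Open Scope ring_scope.

Section Defs.
Variables (R : realFieldType) (n : nat).

(* A split A|B of X = 'I_n is represented by its block A, with B = ~: A. *)
Definition is_split (A : {set 'I_n}) : bool := (A != set0) && (~: A != set0).

Definition compatible (A C : {set 'I_n}) : bool :=
  [|| A :&: C == set0, A :&: ~: C == set0, ~: A :&: C == set0
    | ~: A :&: ~: C == set0].

Definition ind (A : {set 'I_n}) : 'rV[R]_n := \row_i (i \in A)%:R.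

Definition dotv (x y : 'rV[R]_n) : R := \sum_i x 0 i * y 0 i.

Definition vsplit (A : {set 'I_n}) : 'rV[R]_n :=
  (#|~: A|%:R / n%:R) *: ind A - (#|A|%:R / n%:R) *: ind (~: A).

Definition V0 : {vspace 'rV[R]_n} :=
  lker (linfun (fun x : 'rV[R]_n => (dotv x (ind setT))%:M : 'rV[R]_1)).

Definition Hsplit (A : {set 'I_n}) : {vspace 'rV[R]_n} :=
  (V0 :&: lker (linfun (fun x : 'rV[R]_n => (dotv x (vsplit A))%:M : 'rV[R]_1)))%VS.

(* intersection of H_sigma over sigma in S' (empty intersection = V_0) *)
Definition capH (S' : {set {set 'I_n}}) : {vspace 'rV[R]_n} :=
  (V0 :&: \bigcap_(A in S') Hsplit A)%VS.

Definition piS (S' : {set {set 'I_n}}) : {set {set 'I_n}} :=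
  equivalence_partition
    (fun i j : 'I_n => [forall A in S', (i \in A) == (j \in A)]) [set: 'I_n].

Definition span_rel (rho : {set {set 'I_n}}) : {vspace 'rV[R]_n} :=
  << [seq ind [set p.1] - ind [set p.2] |
       p <- enum [pred p : 'I_n * 'I_n | pblock rho p.1 == pblock rho p.2]] >>%VS.

Definition refines (rho' rho : {set {set 'I_n}}) : bool :=
  [forall B in rho', [exists C in rho, B \subset C]].

Definition im_pi (S : {set {set 'I_n}}) : pred {set {set 'I_n}} :=
  fun rho => [exists S' : {set {set 'I_n}}, (S' \subset S) && (piS S' == rho)].

Definition int_poset (S : {set {set 'I_n}}) : pred {vspace 'rV[R]_n} :=
  fun U => [exists S' : {set {set 'I_n}}, (S' \subset S) && (U == capH S')].

Definition mcl (S S' : {set {set 'I_n}}) : {set {set 'I_n}} :=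
  [set A in S | (capH S' <= Hsplit A)%VS].

End Defs.

Arguments int_poset R {n} S.
Arguments mcl R {n} S S'.
Arguments capH R {n} S'.
Arguments span_rel R {n} rho.

From HB Require Import structures.
From mathcomp Require Import all_boot all_order all_algebra.
Import Order.TTheory GRing.Theory Num.Theory.
Local Open Scope ring_scope.
Set Implicit Arguments. Unset Strict Implicit. Unset Printing Implicit Defensive.

(* A vector of V_0 lies in H_A exactly when its coordinates sum to zero over A,
   and the vectors whose coordinates sum to zero over every block of a partition
   rho of X are exactly the span of the 1_i - 1_j with i, j in a common block.
   So the heart of the matter is that, for a pairwise compatible family T, zero
   sums over X and over every split in T force zero sums over every class of
   pi(T); by compatibility, a side of minimal size among the sides of the
   splits of T is a class, which allows an induction on T.  The span of such a
   partition determines it, inclusion of spans is refinement, and a split lies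
   in the closure of S' iff adding its hyperplane does not shrink the
   intersection, i.e. iff it does not change pi(S'). *)

Section SameSide.
Variable n : nat.
Implicit Types (A C D : {set 'I_n}) (T : {set {set 'I_n}}).

Definition same_side T i j := [forall A in T, (i \in A) == (j \in A)].

Definition side_class T i := [set j | same_side T i j].

Lemma same_side_refl T : reflexive (same_side T).
Proof. by move=> i; apply/forall_inP. Qed.

Lemma same_side_sym T : symmetric (same_side T).
Proof. by move=> i j; apply/forall_inP/forall_inP => ij A AT; rewrite eq_sym ij. Qed.

Lemma same_side_trans T : transitive (same_side T).
Proof.
move=> j i k /forall_inP ij /forall_inP jk; apply/forall_inP => A AT.
by rewrite (eqP (ij A AT)) jk.
Qed.

Lemma same_side_subset T' T i j : T' \subset T -> same_side T i j -> same_side T' i j.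
Proof.
by move=> /subsetP T'T /forall_inP ij; apply/forall_inP => A /T'T; apply: ij.
Qed.

Lemma same_side_setD1 T A D i j : A \in T -> D = A \/ D = ~: A ->
  same_side T i j = ((i \in D) == (j \in D)) && same_side (T :\ A) i j.
Proof.
move=> AT DA; have sideD : ((i \in D) == (j \in D)) = ((i \in A) == (j \in A)).
  by case: DA => ->; rewrite ?inE ?(inj_eq negb_inj).
rewrite sideD -{1}(setD1K AT); apply/forall_inP/andP => [ij|[iAj /forall_inP ij] C].
  split; first by apply: ij; rewrite !inE eqxx.
  by apply/forall_inP => C CT; apply: ij; rewrite inE CT orbT.
by rewrite in_setU1 => /orP[/eqP->|/ij].
Qed.

Lemma side_class_meet T i D : {in D &, forall j l, same_side T j l} ->
  side_class T i :&: D = set0 \/ side_class T i :&: D = D.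
Proof.
move=> homD; have [|[j]] := set_0Vmem (side_class T i :&: D); first by left.
rewrite !inE => /andP[ij jD]; right; apply/setIidPr/subsetP => l lD.
by rewrite inE (same_side_trans ij) ?homD.
Qed.

Lemma piS_partition T : partition (piS T) [set: 'I_n].
Proof.
apply: equivalence_partitionP => i j k _ _ _.
split=> [|ij]; first exact: same_side_refl.
by apply/idP/idP; apply: same_side_trans; rewrite // same_side_sym.
Qed.

Lemma pblock_piS T i : pblock (piS T) i = side_class T i.
Proof.
have [_ ti _] := and3P (piS_partition T).
apply: def_pblock => //; last by rewrite inE same_side_refl.
by apply/imsetP; exists i => //; apply/setP => j; rewrite !inE.
Qed.

End SameSide.

Section Compatibility.
Variable n : nat.
Implicit Types (A C D : {set 'I_n}) (T : {set {set 'I_n}}).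

Lemma compatibleE A C :
  compatible A C = [|| A \subset ~: C, A \subset C, C \subset A | ~: C \subset A].
Proof.
by rewrite /compatible !setI_eq0 !disjoints_subset !setCS setCK.
Qed.

Lemma compatibleCl A C : compatible A C -> compatible (~: A) C.
Proof. by rewrite /compatible setCK; case/or4P => ->; rewrite ?orbT. Qed.

Lemma minimal_side T A0 : {in T &, forall A C, compatible A C} -> A0 \in T ->
  exists A D, [/\ A \in T, D = A \/ D = ~: A &
                  forall C, C \in T -> (D \subset C) || (D \subset ~: C)].
Proof.
move=> Tcomp A0T; pose sides := [set D | (D \in T) || (~: D \in T)].
have A0s : A0 \in sides by rewrite /sides inE A0T.
have [D Ds Dmin] := arg_minnP (fun D => #|D|) A0s.
have [A AT DA] : exists2 A, A \in T & D = A \/ D = ~: A.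
  have : D \in sides := Ds; rewrite /sides inE => /orP[DT|DT].
    by exists D; [|left].
  by exists (~: D); [|right; rewrite setCK].
exists A, D; split => // C CT.
have minD E : E \in sides -> E \subset D -> E = D.
  by move=> Es ED; apply/eqP; rewrite eqEcard ED Dmin.
have : compatible D C by case: DA => ->; [|apply: compatibleCl]; apply: Tcomp.
rewrite compatibleE => /or4P[->|->|CD|CD]; rewrite ?orbT //.
  by rewrite -(minD C) ?subxx // /sides inE CT.
by rewrite -(minD (~: C)) ?subxx ?orbT // /sides inE setCK CT orbT.
Qed.

End Compatibility.

Section Coordinates.
Variables (R : realFieldType) (n : nat).
Implicit Types (x y u : 'rV[R]_n) (A K : {set 'I_n}) (T : {set {set 'I_n}}).

Definition sum_on x A := \sum_(i in A) x 0 i.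

Lemma dotv_ind x A : dotv x (ind R A) = sum_on x A.
Proof.
rewrite /dotv /sum_on [RHS]big_mkcond; apply: eq_bigr => i _.
by rewrite mxE mulr_natr mulrb.
Qed.

Lemma sum_onC x A : sum_on x (~: A) = sum_on x setT - sum_on x A.
Proof.
by rewrite /sum_on [in RHS](big_setID (A := setT) A) setTI setTD addrC addKr.
Qed.

Lemma sum_onB x y A : sum_on (x - y) A = sum_on x A - sum_on y A.
Proof. by rewrite /sum_on -sumrB; apply: eq_bigr => i _; rewrite !mxE. Qed.

Lemma sum_on_ind1 i A : sum_on (ind R [set i]) A = (i \in A)%:R.
Proof.
rewrite /sum_on (eq_bigr (fun j => (j == i)%:R)) => [|j _]; last by rewrite mxE inE.
case: (boolP (i \in A)) => iA.
  by rewrite (bigD1 i) //= eqxx big1 ?addr0 // => j /andP[_ /negbTE ->].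
by rewrite big1 // => j jA; case: eqP => // ji; rewrite -ji jA in iA.
Qed.

Lemma row_sum_ind1 x : x = \sum_i x 0 i *: ind R [set i].
Proof.
apply/rowP => k; rewrite summxE (bigD1 k) //= big1 => [|i ik]; rewrite !mxE inE.
  by rewrite eqxx mulr1 addr0.
by rewrite eq_sym (negbTE ik) mulr0.
Qed.

Definition dot_form u x : 'rV[R]_1 := (dotv x u)%:M.

Fact dot_form_is_linear u : linear (dot_form u).
Proof.
move=> a x y; apply/rowP => k; rewrite ord1 !mxE /= !mulr1n /dotv.
rewrite big_distrr -big_split; apply: eq_bigr => i _.
by rewrite !mxE mulrDl -mulrA.
Qed.

HB.instance Definition _ u :=
  GRing.isLinear.Build R _ _ _ (dot_form u) (dot_form_is_linear u).

Lemma mem_lker_dot u x : (x \in lker (linfun (dot_form u))) = (dotv x u == 0).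
Proof.
rewrite memv_ker lfunE /= /dot_form.
by apply/eqP/eqP => [/rowP/(_ 0)|->]; rewrite ?mxE /= ?mulr1n ?raddf0.
Qed.

Lemma dotvBZ x a b u v : dotv x (a *: u - b *: v) = a * dotv x u - b * dotv x v.
Proof.
rewrite /dotv !mulr_sumr -sumrB; apply: eq_bigr => i _.
by rewrite !mxE mulrBr mulrCA [x 0 i * (b * _)]mulrCA.
Qed.

Lemma memV0 x : (x \in V0 R n) = (sum_on x setT == 0).
Proof. by rewrite mem_lker_dot dotv_ind. Qed.

Lemma mem_Hsplit x A : x \in V0 R n -> (x \in Hsplit R A) = (sum_on x A == 0).
Proof.
rewrite memV0 => /eqP x0; rewrite memv_cap memV0 x0 eqxx mem_lker_dot.
(* On V_0 the sum over ~: A is minus the sum over A, so the two weights of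
   v_A add up to #|~: A| / n + #|A| / n = 1. *)
rewrite /vsplit dotvBZ !dotv_ind sum_onC x0 sub0r mulrN opprK -mulrDl.
have [n0|n_gt0] := posnP n.
  by rewrite /sum_on big1 ?mulr0 // => i; have := ltn_ord i; rewrite {2}n0.
rewrite -mulrDl -natrD addnC cardsC card_ord mulfV ?mul1r //.
by rewrite pnatr_eq0 -lt0n.
Qed.

Lemma mem_capH T x :
  (x \in capH R T) = (sum_on x setT == 0) && [forall A in T, sum_on x A == 0].
Proof.
rewrite memv_cap memV0; have [x0|//] := eqP.
have xV0 : x \in V0 R n by rewrite memV0 x0.
rewrite memvE; apply/subv_bigcapP/forall_inP => [xH A AT|xH A AT].
  by rewrite -mem_Hsplit // memvE xH.
by rewrite -memvE mem_Hsplit // xH.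
Qed.

Lemma capH_memV0 T x : x \in capH R T -> x \in V0 R n.
Proof. by rewrite memv_cap => /andP[]. Qed.

Lemma mem_capHU1 A T x :
  (x \in capH R (A |: T)) = (x \in capH R T) && (sum_on x A == 0).
Proof.
rewrite !mem_capH -andbA; congr (_ && _).
apply/forall_inP/andP => [xA|[/forall_inP xT xA] C].
  by split; [apply/forall_inP => C CT|]; apply: xA; rewrite !inE ?CT ?eqxx ?orbT.
by rewrite !inE => /orP[/eqP->|/xT].
Qed.

Lemma ind1B_in_capH T i j :
  same_side T i j -> ind R [set i] - ind R [set j] \in capH R T.
Proof.
move=> /forall_inP ij; rewrite mem_capH sum_onB !sum_on_ind1 !inE subrr eqxx /=.
by apply/forall_inP => A AT; rewrite sum_onB !sum_on_ind1 (eqP (ij A AT)) subrr.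
Qed.

Lemma capH_subv_Hsplit T A :
  (capH R T <= Hsplit R A)%VS = (capH R (A |: T) == capH R T).
Proof.
apply/subvP/eqP => [le|eq_cap x xT].
  apply/vspaceP => x; rewrite mem_capHU1; have [xT|//] := boolP (x \in capH R T).
  by rewrite -mem_Hsplit ?le ?(capH_memV0 xT).
rewrite mem_Hsplit ?(capH_memV0 xT) //.
by move: xT; rewrite -eq_cap mem_capHU1 => /andP[].
Qed.

Definition zero_sum_space (P : {set {set 'I_n}}) : {vspace 'rV[R]_n} :=
  (\bigcap_(K in P) lker (linfun (dot_form (ind R K))))%VS.

Lemma mem_zero_sum_space P x :
  (x \in zero_sum_space P) = [forall K in P, sum_on x K == 0].
Proof.
rewrite memvE; apply/subv_bigcapP/forall_inP => [xK K KP|xK K KP].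
  by rewrite -dotv_ind -mem_lker_dot memvE xK.
by rewrite -memvE mem_lker_dot dotv_ind xK.
Qed.

End Coordinates.
Lemma partitionT_pblock (T : finType) (P : {set {set T}}) i :
  partition P [set: T] -> (pblock P i \in P) * (i \in pblock P i).
Proof.
by move=> /and3P[/eqP covP _ _]; rewrite pblock_mem ?mem_pblock covP.
Qed.

Section Partition.
Variables (R : realFieldType) (n : nat) (rho : {set {set 'I_n}}).
Hypothesis rhoP : partition rho [set: 'I_n].

Lemma ind1B_in_span_rel i j :
  pblock rho i = pblock rho j -> ind R [set i] - ind R [set j] \in span_rel R rho.
Proof.
by move=> ij; apply/memv_span/mapP; exists (i, j); rewrite ?mem_enum ?inE ?ij.
Qed.

Lemma span_rel_zero_sum : span_rel R rho = zero_sum_space R rho.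
Proof.
have [_ tiP _] := and3P rhoP.
have inK K i : K \in rho -> (i \in K) = (pblock rho i == K).
  by move=> KP; apply/idP/eqP => [/(def_pblock tiP KP)|<-] //; rewrite partitionT_pblock.
apply/eqP; rewrite eqEsubv; apply/andP; split.
  apply/span_subvP => v /mapP[[i j] /=]; rewrite mem_enum inE /= => /eqP ij ->.
  rewrite mem_zero_sum_space; apply/forall_inP => K KP.
  by rewrite sum_onB !sum_on_ind1 !inK // ij subrr.
(* Split x into its restrictions to the blocks: a restriction with zero sum is
   a combination of the 1_i - 1_k for one fixed k in its block. *)
have [/eqP covP _ rho0] := and3P rhoP.
apply/subvP => x; rewrite mem_zero_sum_space => /forall_inP x0.
have -> : x = \sum_(i in [set: 'I_n]) x 0 i *: ind R [set i].
  by rewrite [LHS]row_sum_ind1; apply: eq_bigl => i; rewrite inE.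
rewrite -covP big_trivIset //; apply: memv_suml => K KP.
have /set0Pn[k kK] : K != set0 by apply: contraNneq rho0 => <-.
have -> : \sum_(i in K) x 0 i *: ind R [set i] =
          \sum_(i in K) x 0 i *: (ind R [set i] - ind R [set k]).
  rewrite (eq_bigr _ (fun i _ => scalerBr _ _ _)) sumrB -scaler_suml.
  by rewrite -[\sum_(i in K) _]/(sum_on x K) (eqP (x0 K KP)) scale0r subr0.
apply: memv_suml => i iK; apply/memvZ/ind1B_in_span_rel.
by rewrite !(def_pblock tiP KP).
Qed.

End Partition.

Section TwoPartitions.
Variables (R : realFieldType) (n : nat) (rho rho' : {set {set 'I_n}}).
Hypotheses (rhoP : partition rho [set: 'I_n]) (rho'P : partition rho' [set: 'I_n]).

Lemma span_rel_subvP :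
  reflect (forall i, pblock rho' i \subset pblock rho i)
          (span_rel R rho' <= span_rel R rho)%VS.
Proof.
have [[_ ti _] [_ ti' _]] := (and3P rhoP, and3P rho'P).
apply: (iffP idP) => [le i|sub].
  apply/subsetP => j ji; have ij := ind1B_in_span_rel R (same_pblock ti' ji).
  move: (subvP le _ ij); rewrite span_rel_zero_sum // mem_zero_sum_space.
  move/forall_inP/(_ _ (partitionT_pblock i rhoP).1).
  rewrite sum_onB !sum_on_ind1 (partitionT_pblock i rhoP).2 subr_eq0 eqr_nat.
  by case: (j \in _).
apply/span_subvP => v /mapP[[i j] /=]; rewrite mem_enum inE /= => /eqP ij ->.
apply: ind1B_in_span_rel; apply/esym/same_pblock => //; apply: (subsetP (sub i)).
by rewrite ij (partitionT_pblock j rho'P).2.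
Qed.

Lemma refines_pblockP :
  reflect (forall i, pblock rho' i \subset pblock rho i) (refines rho' rho).
Proof.
have [[_ ti _] [_ ti' rho'0]] := (and3P rhoP, and3P rho'P).
apply: (iffP forall_inP) => [ref i|sub B B'].
  have /exists_inP[C CP BC] := ref _ (partitionT_pblock i rho'P).1.
  by rewrite (def_pblock ti CP (subsetP BC _ (partitionT_pblock i rho'P).2)).
have /set0Pn[i iB] : B != set0 by apply: contraNneq rho'0 => <-.
apply/exists_inP; exists (pblock rho i); first exact: (partitionT_pblock i rhoP).1.
by rewrite -(def_pblock ti' B' iB).
Qed.

End TwoPartitions.

Lemma span_rel_inj (R : realFieldType) n (rho rho' : {set {set 'I_n}}) :
  partition rho [set: 'I_n] -> partition rho' [set: 'I_n] ->
  span_rel R rho = span_rel R rho' -> rho = rho'.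
Proof.
move=> rhoP rho'P eq_span.
have eq_pb i : pblock rho i = pblock rho' i.
  apply/eqP; rewrite eqEsubset.
  by rewrite (span_rel_subvP R rhoP rho'P _) ?(span_rel_subvP R rho'P rhoP _) ?eq_span.
rewrite -(equivalence_partition_pblock rhoP) -(equivalence_partition_pblock rho'P).
by apply: eq_in_imset => i _; apply/setP => j; rewrite !inE eq_pb.
Qed.

Lemma sum_on_side_class (R : realFieldType) n (T : {set {set 'I_n}}) (x : 'rV[R]_n) :
  {in T &, forall A C, compatible A C} ->
  sum_on x setT = 0 -> {in T, forall A, sum_on x A = 0} ->
  forall i, sum_on x (side_class T i) = 0.
Proof.
have [k] := ubnP #|T|; elim: k T => // k IH T /ltnSE Tk Tcomp x0 xT i.
(* Remove a split A with a side D of minimal size: D is a class of T, and the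
   other classes of T are those of T :\ A with D taken out. *)
have [->|[A0 A0T]] := set_0Vmem T.
  rewrite (_ : side_class set0 i = setT) //.
  by apply/setP => j; rewrite !inE; apply/forall_inP => A; rewrite inE.
have [A [D [AT DA Dsep]]] := minimal_side Tcomp A0T.
have xD : sum_on x D = 0.
  by case: DA => ->; [exact: xT | rewrite sum_onC x0 xT ?subrr].
have homD : {in D &, forall j l, same_side T j l}.
  move=> j l jD lD; apply/forall_inP => C CT.
  case/orP: (Dsep C CT) => /subsetP DC; first by rewrite !DC.
  by move: (DC j jD) (DC l lD); rewrite !inE => /negbTE-> /negbTE->.
have sideE j := same_side_setD1 i j AT DA.
have [iD|iND] := boolP (i \in D).
  rewrite (_ : side_class T i = D) //; apply/setP => j; rewrite inE.
  by apply/idP/idP => [|jD]; [rewrite sideE iD => /andP[/eqP <-] | exact: homD].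
have T'T : T :\ A \subset T := subsetDl T [set A].
have T'k : (#|T :\ A| < k)%N by move: Tk; rewrite (cardsD1 A) AT.
have := IH (T :\ A) T'k (sub_in2 (subsetP T'T) Tcomp) x0 (sub_in1 (subsetP T'T) xT) i.
have -> : side_class T i = side_class (T :\ A) i :\: D.
  by apply/setP => j; rewrite !inE sideE (negbTE iND) eq_sym eqbF_neg.
rewrite /sum_on (big_setID (A := side_class (T :\ A) i) D) /=.
have homD' : {in D &, forall j l, same_side (T :\ A) j l}.
  by move=> j l jD lD; apply: same_side_subset T'T (homD j l jD lD).
case: (side_class_meet i homD') => ->; first by rewrite big_set0 add0r => ->.
by rewrite -[\sum_(j in D) _]/(sum_on x D) xD add0r => ->.
Qed.

Section CompatibleFamily.
Variables (R : realFieldType) (n : nat) (T : {set {set 'I_n}}).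
Hypothesis Tcomp : {in T &, forall A C, compatible A C}.

Lemma capH_eq_span_rel : capH R T = span_rel R (piS T).
Proof.
apply/eqP; rewrite eqEsubv; apply/andP; split.
  apply/subvP => x; rewrite mem_capH span_rel_zero_sum ?piS_partition //.
  rewrite mem_zero_sum_space => /andP[/eqP x0 /forall_inP xT].
  apply/forall_inP => _ /imsetP[i _ ->].
  have -> : [set j in [set: 'I_n] | same_side T i j] = side_class T i.
    by apply/setP => j; rewrite !inE.
  by apply/eqP/sum_on_side_class => // A AT; apply/eqP/xT.
apply/span_subvP => v /mapP[[i j] /=]; rewrite mem_enum inE /= !pblock_piS.
move=> /eqP ij ->; apply: ind1B_in_capH.
have : j \in side_class T i by rewrite ij inE same_side_refl.
by rewrite inE.
Qed.

End CompatibleFamily.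

Lemma im_piP n (S rho : {set {set 'I_n}}) :
  reflect (exists2 T : {set {set 'I_n}}, T \subset S & piS T = rho) (rho \in im_pi S).
Proof.
rewrite unfold_in; apply: (iffP existsP) => [[T /andP[TS /eqP <-]]|[T TS <-]].
  by exists T.
by exists T; rewrite TS eqxx.
Qed.

Lemma im_pi_partition n (S rho : {set {set 'I_n}}) :
  rho \in im_pi S -> partition rho [set: 'I_n].
Proof. by case/im_piP => T _ <-; apply: piS_partition. Qed.

Theorem mainTheorem7 (R : realFieldType) (n : nat) (S : {set {set 'I_n}})
  (HS : forall A, A \in S -> is_split A)
  (HSset : forall A, A \in S -> ~: A \notin S)
  (Hcomp : forall A C, A \in S -> C \in S -> compatible A C) :
  (forall S' : {set {set 'I_n}}, S' \subset S -> capH R S' = span_rel R (piS S'))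
  /\ (exists f : {set {set 'I_n}} -> {vspace 'rV[R]_n},
        [/\ forall S' : {set {set 'I_n}}, S' \subset S -> f (piS S') = capH R S',
            {in im_pi S &, injective f},
            forall U : {vspace 'rV[R]_n}, U \in int_poset R S <-> exists2 rho, rho \in im_pi S & f rho = U
          & {in im_pi S &, forall rho rho' : {set {set 'I_n}},
                refines rho' rho <-> (f rho' <= f rho)%VS}])
  /\ (forall S' : {set {set 'I_n}}, S' \subset S ->
        mcl R S S' = [set A in S | piS (A |: S') == piS S']).
Proof.
have capE (T : {set {set 'I_n}}) : T \subset S -> capH R T = span_rel R (piS T).
  by move=> /subsetP TS; apply: capH_eq_span_rel => A C /TS AS /TS CS; apply: Hcomp.
split; first exact: capE.
split.
  exists (span_rel R); split.
  - by move=> S' S'S; rewrite capE.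
  - by move=> rho rho' /im_pi_partition rhoP /im_pi_partition rho'P; apply: span_rel_inj.
  - move=> U; split => [/existsP[T /andP[TS /eqP->]]|[_ /im_piP[T TS <-] <-]].
      by exists (piS T); [apply/im_piP; exists T | rewrite capE].
    by apply/existsP; exists T; rewrite TS capE ?eqxx.
  - move=> rho rho' /im_pi_partition rhoP /im_pi_partition rho'P.
    exact: iff_trans (iff_sym (rwP (refines_pblockP rhoP rho'P)))
                     (rwP (span_rel_subvP R rhoP rho'P)).
move=> S' S'S; apply/setP => A; rewrite !inE; have [AS|//] := boolP (A \in S).
have AS'S : A |: S' \subset S by rewrite subUset sub1set AS.
rewrite capH_subv_Hsplit !capE //.
by apply/eqP/eqP => [/span_rel_inj->|->] //; apply: piS_partition.
Qed.
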